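(* Fix $\theta\in[0,1]$ and let \[ A_r(\theta)=\Big[1+\theta\Big(\frac{2r}{n}-1\Big)\Big]\frac{B_r}{r},\qquad 1\le r\le n-1 . \] (i) For any $r^*(\theta)\in\arg\max\{A_r(\theta):1\le r\le n-1\}$, the prize schedule ${\bf v}^{r^*(\theta)}$ (awarding $r^*(\theta)$ equal prizes $1/r^*(\theta)$ at the top and zero to everyone else) maximizes $M({\bf v},\theta)$ over ${\bf v}\in\mathcal V$, and hence maximizes the equilibrium effort; the maximal value is $\max_r A_r(\theta)$. (ii) The optimal number of top prizes is weakly increasing in loss aversion: if $0\le\theta<\theta'\le1$, then $\max\arg\max_r A_r(\theta)\le\max\arg\max_r A_r(\theta')$ and $\min\arg\max_r A_r(\theta)\le\min\arg\max_r A_r(\theta')$.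
   Context: Fix an integer $n\ge 2$ and a noise distribution with cdf $F$ and density $f$ on $\mathbb R$ (integrals finite). For $r=1,\dots,n$ let $g_r(u)=u^{n-r}(1-u)^{r-1}$ and $\beta_r=\binom{n-1}{r-1}\int g_r'(F(t))f(t)^2dt$ (marginal effect of own effort on the probability of being ranked $r$ in a symmetric profile); $B_r=\sum_{k=1}^r\beta_k$, which for $1\le r\le n-1$ equals $r\binom{n-1}{r}\int F(t)^{n-1-r}[1-F(t)]^{r-1}f(t)^2dt>0$, and $B_n=0$. Let $\mathcal V=\{{\bf v}\in\mathbb R^n: v_1\ge\dots\ge v_n\ge 0,\ \sum_r v_r=1\}$, $R({\bf v})=\sum_r\beta_rv_r$, $L({\bf v})=-\frac1n\sum_{r=1}^n\sum_{s<r}(\beta_r+\beta_s)(v_s-v_r)$, $M({\bf v},\theta)=R({\bf v})+\theta L({\bf v})$, $\theta\in[0,1]$. For $1\le s\le n-1$, ${\bf v}^s=(\frac1s,\dots,\frac1s,0,\dots,0)$ has $s$ nonzero prizes. The symmetric equilibrium effort solves $c'(x^* )=M({\bf v},\theta)$ for a strictly increasing, strictly convex, differentiable cost $c$ with $c(0)=c'(0)=0$, so it is strictly increasing in $M$. *)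

From HB Require Import structures.
From mathcomp Require Import all_boot all_order all_algebra.
From mathcomp Require Import all_classical all_reals all_analysis.
Unset Printing Implicit Defensive.
Import Order.TTheory GRing.Theory Num.Theory.
Local Open Scope classical_set_scope.
Local Open Scope ring_scope.

(* Noise distribution: density f (measurable, >= 0, total mass 1, f^2 integrable
   so that all the integrals below are finite) and cdf F(t) = int_{(-oo,t]} f. *)
Definition noise_dist {R : realType} (F f : R -> R) : Prop :=
  [/\ measurable_fun [set: R] f,
      (forall t, 0 <= f t),
      (\int[lebesgue_measure]_(t in [set: R]) (f t)%:E = 1)%E,
      (forall t, F t = fine (\int[lebesgue_measure]_(x in `]-oo, t]) (f x)%:E)%E) &
      lebesgue_measure.-integrable [set: R] (fun t => (f t ^+ 2)%:E)].

Definition gpoly {R : realType} (n r : nat) : {poly R} :=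
  'X ^+ (n - r) * (1 - 'X) ^+ (r - 1).

(* beta_r = C(n-1, r-1) * int g_r'(F t) f(t)^2 dt, r = 1..n (1-based) *)
Definition beta {R : realType} (n : nat) (F f : R -> R) (r : nat) : R :=
  ('C(n - 1, r - 1))%:R *
  Rintegral lebesgue_measure [set: R]
    (fun t => ((@gpoly R n r)^`()).[F t] * f t ^+ 2).

Definition Bsum {R : realType} (n : nat) (F f : R -> R) (r : nat) : R :=
  \sum_(1 <= k < r.+1) beta n F f k.

(* prize vectors: v : 'I_n -> R, with v i = v_{i+1} (prize for rank i+1) *)
Definition in_V {R : realType} (n : nat) (v : 'I_n -> R) : Prop :=
  [/\ (forall i j : 'I_n, (i <= j)%N -> v j <= v i),
      (forall i, 0 <= v i) &
      \sum_(i < n) v i = 1].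

Definition Rv {R : realType} (n : nat) (F f : R -> R) (v : 'I_n -> R) : R :=
  \sum_(i < n) beta n F f i.+1 * v i.

Definition Lv {R : realType} (n : nat) (F f : R -> R) (v : 'I_n -> R) : R :=
  - (n%:R)^-1 * \sum_(i < n) \sum_(j < n | (j < i)%N)
       (beta n F f i.+1 + beta n F f j.+1) * (v j - v i).

Definition Mv {R : realType} (n : nat) (F f : R -> R) (v : 'I_n -> R) (theta : R) : R :=
  Rv n F f v + theta * Lv n F f v.

Definition vs {R : realType} (n s : nat) : 'I_n -> R :=
  fun i => if (i < s)%N then (s%:R)^-1 else 0.

Definition Ar {R : realType} (n : nat) (F f : R -> R) (theta : R) (r : nat) : R :=
  (1 + theta * (2 * r%:R / n%:R - 1)) * Bsum n F f r / r%:R.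

Definition is_argmax {R : realType} (n : nat) (F f : R -> R) (theta : R) (r : nat) : Prop :=
  (1 <= r <= n - 1)%N /\
  forall s : nat, (1 <= s <= n - 1)%N -> Ar n F f theta s <= Ar n F f theta r.

Definition is_max_argmax {R : realType} (n : nat) (F f : R -> R) (theta : R) (r : nat) : Prop :=
  is_argmax n F f theta r /\ forall s, is_argmax n F f theta s -> (s <= r)%N.

Definition is_min_argmax {R : realType} (n : nat) (F f : R -> R) (theta : R) (r : nat) : Prop :=
  is_argmax n F f theta r /\ forall s, is_argmax n F f theta s -> (r <= s)%N.

From HB Require Import structures.
From mathcomp Require Import all_boot all_order all_algebra.
From mathcomp Require Import all_classical all_reals all_analysis.
From mathcomp Require Import measurable_realfun.
From mathcomp Require Import ring lra.
Import Order.TTheory GRing.Theory Num.Theory.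
Local Open Scope ring_scope.

(* [M] is linear in the prize vector, and every [v] in [V] is the convex
   combination [sum_s s (v_s - v_(s+1)) v^s] of the schedules [v^s], 1 <= s <= n.
   Since [sum_k C(n-1,k-1) g_k = (u + (1 - u))^(n-1) = 1], we get [B_n = 0], and then
   [M(v^s) = A_s]; as [A_n = 0 <= A_1], no [v] beats the best [v^r], 1 <= r <= n-1.
   For (ii) write [A_r(theta) = w(theta, r) B_r / r] with a positive weight
   [w(theta, r) = 1 + theta (2r/n - 1)]; [w] is log-supermodular, so for [r' < r] and
   [B_r >= 0] the comparison [A_r' <= A_r] (or [<]) at [theta] persists at [theta' > theta]. *)

Lemma sum_binomial_gpoly {R : realType} n : (0 < n)%N ->
  \sum_(1 <= k < n.+1) 'C(n - 1, k - 1)%:R *: @gpoly R n k = 1.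
Proof.
case: n => // m _; rewrite big_add1 /= big_mkord.
have := exprDn 'X (1 - 'X : {poly R}) m; rewrite addrC subrK expr1n => ->.
by apply: eq_bigr => i _; rewrite /gpoly subSS !subn1 /= scaler_nat subn0 subSS.
Qed.

Section noise_distribution.
Local Open Scope classical_set_scope.
Context {R : realType} (F f : R -> R).
Hypothesis nd : noise_dist F f.

Lemma measurable_EFin_density : measurable_fun [set: R] (EFin \o f).
Proof. by case: nd => mf *; exact/measurable_EFinP. Qed.

Lemma cdfE t : (F t)%:E = (\int[lebesgue_measure]_(x in `]-oo, t]) (f x)%:E)%E.
Proof.
case: nd => _ f0 f1 Fdef _; rewrite Fdef fineK// ge0_fin_numE.
  rewrite (le_lt_trans _ (ltry 1)) // -f1; apply: ge0_subset_integral => //=.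
    exact: measurable_EFin_density.
  by move=> x _; rewrite lee_fin.
by apply: integral_ge0 => x _; rewrite lee_fin.
Qed.

Lemma cdf_ge0_le1 t : 0 <= F t <= 1.
Proof.
case: nd => _ f0 f1 _ _; rewrite -!lee_fin cdfE.
rewrite integral_ge0 /= => [|x _]; last by rewrite lee_fin.
rewrite -f1; apply: ge0_subset_integral => //=.
  exact: measurable_EFin_density.
by move=> x _; rewrite lee_fin.
Qed.

Lemma cdf_nondecreasing : nondecreasing_fun F.
Proof.
case: nd => _ f0 _ _ _ s t st; rewrite -lee_fin !cdfE.
apply: ge0_subset_integral => //=.
- exact: measurable_funS measurable_EFin_density.
- by move=> x _; rewrite lee_fin.
- by move=> x /=; rewrite !in_itv /= => /le_trans; apply.
Qed.

Lemma horner_cdf_bounded (p : {poly R}) : [bounded p.[F t] | t in [set: R]].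
Proof.
have [M [Mreal HM]] : bounded_set (horner p @` `[0, 1]).
  apply: compact_bounded; apply: continuous_compact; last exact: segment_compact.
  by apply: continuous_subspaceT; exact: continuous_horner.
exists M; split => // N MN t _; apply: HM MN _ _.
by exists (F t) => //; rewrite /= in_itv /= cdf_ge0_le1.
Qed.

Lemma integrable_horner_cdf_density_sq (p : {poly R}) :
  lebesgue_measure.-integrable [set: R] (fun t => (p.[F t] * f t ^+ 2)%:E).
Proof.
case: nd => _ _ _ _ f2.
have mp : measurable_fun [set: measurableTypeR R] (fun t => p.[F t]).
  apply: measurableT_comp; last exact: nondecreasing_measurable cdf_nondecreasing.
  by apply: continuous_measurable_fun; exact: continuous_horner.
move: (integrableMr measurableT mp (horner_cdf_bounded p) f2).
by apply: eq_integrable => // t _; rewrite /= EFinM.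
Qed.

Definition cdf_moment (p : {poly R}) : R :=
  Rintegral lebesgue_measure [set: R] (fun t => p.[F t] * f t ^+ 2).

Fact cdf_moment_is_semilinear : semilinear cdf_moment.
Proof.
split=> [c p|p q]; rewrite /cdf_moment.
  rewrite -[RHS]/(c * _) -RintegralZl //; last exact: integrable_horner_cdf_density_sq.
  apply: eq_Rintegral => t _.
  by rewrite hornerZ -mulrA.
rewrite -RintegralD //=; try exact: integrable_horner_cdf_density_sq.
by apply: eq_Rintegral => t _; rewrite hornerD mulrDl.
Qed.

#[local] HB.instance Definition _ :=
  GRing.isSemilinear.Build R {poly R} R _ cdf_moment cdf_moment_is_semilinear.

Lemma cdf_moment_ge0 (p : {poly R}) :
  (forall x, 0 <= x <= 1 -> 0 <= p.[x]) -> 0 <= cdf_moment p.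
Proof.
move=> p01; apply: Rintegral_ge0 => t _.
by rewrite mulr_ge0 ?sqr_ge0 ?p01 ?cdf_ge0_le1.
Qed.

Lemma betaE n k :
  beta n F f k = cdf_moment ('C(n - 1, k - 1)%:R *: gpoly n k)^`().
Proof. by rewrite !linearZ. Qed.

Lemma Bsum_last n : (0 < n)%N -> Bsum n F f n = 0.
Proof.
move=> n_gt0; rewrite /Bsum (eq_bigr _ (fun k _ => betaE n k)) -!linear_sum /=.
by rewrite sum_binomial_gpoly // -polyC1 derivC linear0.
Qed.

Lemma Bsum1_ge0 n : 0 <= Bsum n F f 1.
Proof.
rewrite /Bsum big_nat1 /beta mulr_ge0 // cdf_moment_ge0 // => x /andP[x0 _].
by rewrite /gpoly subnn expr0 mulr1 derivXn hornerMn hornerXn mulrn_wge0 ?exprn_ge0.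
Qed.

End noise_distribution.

Section prize_schedules.
Context {R : realType} (n : nat) (F f : R -> R).
Local Notation b i := (beta n F f i.+1).

Lemma Bsum_nat r : Bsum n F f r = \sum_(0 <= i < r) b i.
Proof. by rewrite /Bsum big_add1. Qed.

Lemma sum_beta_nat s : (s <= n)%N ->
  \sum_(s <= i < n) b i = Bsum n F f n - Bsum n F f s.
Proof. by move=> sn; rewrite !Bsum_nat (big_cat_nat (leq0n s) sn) addrAC subrr add0r. Qed.

Lemma Rv_vs s : (s <= n)%N -> Rv n F f (vs n s) = Bsum n F f s / s%:R.
Proof.
move=> sn; rewrite /Rv Bsum_nat big_mkord (big_ord_widen n (fun i => b i) sn).
rewrite mulr_suml [RHS]big_mkcond.
by apply: eq_bigr => i _; rewrite /vs; case: ifP; rewrite ?mulr0.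
Qed.

Lemma Lv_vs_row s (i : 'I_n) : (0 < s <= n)%N ->
  \sum_(j < n | (j < i)%N) (b i + b j) * (vs n s j - vs n s i) =
  if (s <= i)%N then b i + Bsum n F f s / s%:R else 0.
Proof.
case/andP=> s0 sn; case: leqP => [si|i_lt_s]; last first.
  by apply: big1 => j ji; rewrite /vs (ltn_trans ji i_lt_s) i_lt_s subrr mulr0.
rewrite big_mkcond (eq_bigr (fun j : 'I_n => if (j < s)%N then (b i + b j) / s%:R else 0)).
  rewrite -big_mkcond -(big_ord_widen n (fun j => (b i + b j) / s%:R) sn) -mulr_suml big_split.
  rewrite sumr_const card_ord Bsum_nat big_mkord mulrDl -(mulr_natr (b i)) mulfK //.
  by rewrite pnatr_eq0 -lt0n.
move=> j _; rewrite /vs (ltnNge i s) si subr0; case: (ltnP j s) => js.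
  by rewrite (leq_trans js si).
by case: ifP; rewrite /= ?mulr0.
Qed.

Lemma Lv_vs s : (0 < s <= n)%N ->
  Lv n F f (vs n s) = - n%:R^-1 * \sum_(s <= i < n) (b i + Bsum n F f s / s%:R).
Proof.
move=> s_range; rewrite /Lv (eq_bigr _ (fun i _ => Lv_vs_row s i s_range)).
by rewrite -big_mkcond big_geq_mkord.
Qed.

Lemma Mv_vs theta s : Bsum n F f n = 0 -> (0 < s <= n)%N ->
  Mv n F f (vs n s) theta = Ar n F f theta s.
Proof.
move=> Bn s_range; have /andP[s0 sn] := s_range.
have s0R : s%:R != 0 :> R by rewrite pnatr_eq0 -lt0n.
have n0R : n%:R != 0 :> R by rewrite pnatr_eq0 -lt0n (leq_trans s0 sn).
rewrite /Mv Rv_vs // Lv_vs // big_split /= sum_beta_nat // Bn sumr_const_nat /Ar.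
rewrite -(mulr_natr (_ / _)) natrB //; field; exact/andP.
Qed.

Lemma Rv_sum (lam : 'I_n -> R) (u : 'I_n -> 'I_n -> R) :
  Rv n F f (fun i => \sum_(s < n) lam s * u s i) = \sum_(s < n) lam s * Rv n F f (u s).
Proof.
rewrite /Rv; under eq_bigr do rewrite mulr_sumr.
rewrite exchange_big /=; apply: eq_bigr => s _; rewrite mulr_sumr.
by apply: eq_bigr => i _; rewrite mulrCA.
Qed.

Lemma Lv_sum (lam : 'I_n -> R) (u : 'I_n -> 'I_n -> R) :
  Lv n F f (fun i => \sum_(s < n) lam s * u s i) = \sum_(s < n) lam s * Lv n F f (u s).
Proof.
rewrite /Lv; under eq_bigr do under eq_bigr do rewrite -sumrB mulr_sumr.
under eq_bigr do rewrite exchange_big /=.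
rewrite exchange_big /= mulr_sumr; apply: eq_bigr => s _.
rewrite [RHS]mulrCA; congr (_ * _); rewrite mulr_sumr; apply: eq_bigr => i _.
by rewrite mulr_sumr; apply: eq_bigr => j _; rewrite -mulrBr mulrCA.
Qed.

Lemma Mv_sum theta (lam : 'I_n -> R) (u : 'I_n -> 'I_n -> R) :
  Mv n F f (fun i => \sum_(s < n) lam s * u s i) theta
  = \sum_(s < n) lam s * Mv n F f (u s) theta.
Proof.
rewrite /Mv Rv_sum Lv_sum mulr_sumr -big_split /=.
by apply: eq_bigr => s _; rewrite mulrDr mulrCA.
Qed.

End prize_schedules.

Lemma vs_in_V {R : realType} n s : (0 < s <= n)%N -> in_V n (@vs R n s).
Proof.
case/andP=> s0 sn; have s_ge0 : 0 <= s%:R^-1 :> R by rewrite invr_ge0.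
split=> [i j ij|i|]; rewrite /vs.
- by case: (ltnP j s) => js; [rewrite (leq_ltn_trans ij js)|case: ifP].
- by case: ifP.
rewrite -big_mkcond -(big_ord_widen n (fun=> s%:R^-1) sn) sumr_const card_ord.
by rewrite -(mulr_natr s%:R^-1) mulVf // pnatr_eq0 -lt0n.
Qed.

Section vs_decomposition.
Context {R : realType} {n : nat} (v : 'I_n.+1 -> R).

Definition prize_ext (k : nat) : R := if (k < n.+1)%N then v (inord k) else 0.

Definition vs_weight (s : 'I_n.+1) : R := s.+1%:R * (prize_ext s - prize_ext s.+1).

Lemma vs_decomposition (i : 'I_n.+1) :
  v i = \sum_(s < n.+1) vs_weight s * vs n.+1 s.+1 i.
Proof.
under eq_bigr => s _.
  rewrite /vs_weight /vs ltnS mulrC (fun_if (fun c => c * _)) mul0r mulrA.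
  rewrite mulVf ?pnatr_eq0 // mul1r.
  over.
rewrite -big_mkcond.
have -> : \sum_(s < n.+1 | (i <= s)%N) (prize_ext s - prize_ext s.+1) =
          \sum_(i <= s < n.+1) (prize_ext s - prize_ext s.+1) by rewrite big_geq_mkord.
rewrite (@telescope_sumr_eq _ i n.+1 (fun k => - prize_ext k)) => [||k _].
- by rewrite /prize_ext ltnn ltn_ord inord_val oppr0 sub0r opprK.
- exact: ltnW.
by rewrite opprK addrC.
Qed.

Lemma vs_weight_ge0 s : in_V n.+1 v -> 0 <= vs_weight s.
Proof.
case=> v_nonincr v_ge0 _; rewrite mulr_ge0 // subr_ge0 /prize_ext ltn_ord.
case: ifP => [s1_lt|_]; last by rewrite inord_val v_ge0.
by apply: v_nonincr; rewrite !inordK // ltnW.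
Qed.

Lemma sum_vs_weight : in_V n.+1 v -> \sum_(s < n.+1) vs_weight s = 1.
Proof.
case=> _ _ <-; under [RHS]eq_bigr => i _ do rewrite vs_decomposition.
rewrite exchange_big /=; apply: eq_bigr => s _.
by case: (@vs_in_V R n.+1 s.+1 (ltn_ord s)) => _ _ vs1; rewrite -mulr_sumr vs1 mulr1.
Qed.

End vs_decomposition.

Lemma Mv_le_Ar_bound {R : realType} n (F f : R -> R) theta (A : R) v :
  (0 < n)%N -> Bsum n F f n = 0 -> in_V n v ->
  (forall s, (0 < s <= n)%N -> Ar n F f theta s <= A) ->
  Mv n F f v theta <= A.
Proof.
case: n v => // n v _ Bn vV Ar_le.
have -> : v = fun i => \sum_(s < n.+1) vs_weight v s * vs n.+1 s.+1 i.
  by apply/funext => i; exact: vs_decomposition.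
rewrite Mv_sum -[A]mul1r -(sum_vs_weight v vV) mulr_suml.
apply: ler_sum => s _; apply: ler_wpM2l; first exact: vs_weight_ge0.
have s_range : (0 < s.+1 <= n.+1)%N := ltn_ord s.
by rewrite Mv_vs //; apply: Ar_le.
Qed.

Lemma ler_ratio_transfer {R : realFieldType} (p q p' q' x y : R) :
  0 < p -> 0 <= p' -> 0 <= y -> p' * q <= q' * p ->
  p * x <= q * y -> p' * x <= q' * y.
Proof.
move=> p_gt0 p'_ge0 y_ge0 pq pxy.
have := ler_wpM2l p'_ge0 pxy; have := ler_wpM2r y_ge0 pq.
rewrite -(ler_pM2l p_gt0); nra.
Qed.

Lemma ltr_ratio_transfer {R : realFieldType} (p q p' q' x y : R) :
  0 < p -> 0 < p' -> 0 <= y -> p' * q <= q' * p ->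
  p * x < q * y -> p' * x < q' * y.
Proof.
move=> p_gt0 p'_gt0 y_ge0 pq pxy.
have : p' * (p * x) < p' * (q * y) by rewrite ltr_pM2l.
have := ler_wpM2r y_ge0 pq.
rewrite -(ltr_pM2l p_gt0); nra.
Qed.

Section loss_aversion_weight.
Context {R : realType} (n : nat) (F f : R -> R).

Definition Ar_weight theta r : R := 1 + theta * (2 * r%:R / n%:R - 1).

Lemma ArE theta r : Ar n F f theta r = Ar_weight theta r * (Bsum n F f r / r%:R).
Proof. by rewrite /Ar mulrA. Qed.

Lemma Ar_weight_gt0 theta r : (0 < n)%N -> 0 <= theta <= 1 -> (0 < r)%N ->
  0 < Ar_weight theta r.
Proof.
move=> n_gt0 /andP[th0 th1] r_gt0.
have x_gt0 : 0 < 2 * r%:R / n%:R :> R by rewrite !mulr_gt0 ?invr_gt0 ?ltr0n.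
rewrite /Ar_weight; have [th_lt1|th_ge1] := ltrP theta 1.
  by have := mulr_ge0 th0 (ltW x_gt0); lra.
have -> : theta = 1 by apply/le_anti/andP.
by rewrite mul1r addrC subrK.
Qed.

Lemma Ar_weight_logsupermodular theta theta' r r' : theta <= theta' -> (r' <= r)%N ->
  Ar_weight theta' r' * Ar_weight theta r <= Ar_weight theta' r * Ar_weight theta r'.
Proof.
move=> th_le r_le; rewrite -subr_ge0.
have -> : Ar_weight theta' r * Ar_weight theta r' - Ar_weight theta' r' * Ar_weight theta r =
    (theta' - theta) * (2 * r%:R / n%:R - 2 * r'%:R / n%:R) by rewrite /Ar_weight; ring.
by rewrite mulr_ge0 ?subr_ge0 // ler_wpM2r ?invr_ge0 ?ler0n // ler_wpM2l // ler_nat.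
Qed.

End loss_aversion_weight.

Section optimal_prizes.
Context {R : realType} (n : nat) (F f : R -> R).
Hypotheses (n_gt1 : (1 < n)%N) (B1_ge0 : 0 <= Bsum n F f 1).

Let n_gt0 : (0 < n)%N. Proof. exact: ltnW. Qed.

Lemma argmax_Ar_ge0 {theta r} : 0 <= theta <= 1 -> is_argmax n F f theta r ->
  0 <= Ar n F f theta r.
Proof.
move=> th01 [_ r_max]; apply: le_trans (r_max 1%N _); last by rewrite leqnn subn_gt0.
by rewrite ArE mulr_ge0 ?divr_ge0 // ltW // Ar_weight_gt0.
Qed.

Lemma argmax_ratio_ge0 {theta r} : 0 <= theta <= 1 -> is_argmax n F f theta r ->
  0 <= Bsum n F f r / r%:R.
Proof.
move=> th01 r_argmax; have [/andP[r_gt0 _] _] := r_argmax.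
by have := argmax_Ar_ge0 th01 r_argmax; rewrite ArE pmulr_rge0 // Ar_weight_gt0.
Qed.

Lemma argmax_vs_optimal theta r : Bsum n F f n = 0 -> 0 <= theta <= 1 ->
  is_argmax n F f theta r ->
  [/\ in_V n (@vs R n r),
      forall v, in_V n v -> Mv n F f v theta <= Mv n F f (@vs R n r) theta &
      Mv n F f (@vs R n r) theta = Ar n F f theta r].
Proof.
move=> Bn th01 r_argmax; have [/andP[r_gt0 r_lt] r_max] := r_argmax.
have r_range : (0 < r <= n)%N by rewrite r_gt0 (leq_trans r_lt) ?leq_subr.
have Mv_r : Mv n F f (vs n r) theta = Ar n F f theta r by rewrite Mv_vs.
split=> [|v vV|//]; first exact: vs_in_V.
rewrite Mv_r; apply: Mv_le_Ar_bound => // s /andP[s_gt0]; rewrite leq_eqVlt.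
case/orP=> [/eqP ->|s_lt]; last by apply: r_max; rewrite s_gt0 subn1 -ltnS prednK.
by rewrite /Ar Bn mulr0 mul0r; exact: argmax_Ar_ge0.
Qed.

Section loss_aversion_increase.
Variables theta theta' : R.
Hypotheses (th_ge0 : 0 <= theta) (th_le : theta <= theta') (th'_le1 : theta' <= 1).

Let th01 : 0 <= theta <= 1. Proof. by rewrite th_ge0 (le_trans th_le). Qed.
Let th'01 : 0 <= theta' <= 1. Proof. by rewrite th'_le1 (le_trans th_ge0). Qed.

Lemma Ar_le_transfer {r r'} : (0 < r')%N -> (r' <= r)%N -> 0 <= Bsum n F f r / r%:R ->
  Ar n F f theta r' <= Ar n F f theta r -> Ar n F f theta' r' <= Ar n F f theta' r.
Proof.
move=> r'_gt0 r'_le c_ge0; rewrite !ArE; apply: ler_ratio_transfer => //.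
- exact: Ar_weight_gt0.
- exact/ltW/Ar_weight_gt0.
- exact: Ar_weight_logsupermodular.
Qed.

Lemma Ar_lt_transfer {r r'} : (0 < r')%N -> (r' <= r)%N -> 0 <= Bsum n F f r / r%:R ->
  Ar n F f theta r' < Ar n F f theta r -> Ar n F f theta' r' < Ar n F f theta' r.
Proof.
move=> r'_gt0 r'_le c_ge0; rewrite !ArE; apply: ltr_ratio_transfer => //.
- exact: Ar_weight_gt0.
- exact: Ar_weight_gt0.
- exact: Ar_weight_logsupermodular.
Qed.

Lemma max_argmax_nondecreasing r r' :
  is_max_argmax n F f theta r -> is_max_argmax n F f theta' r' -> (r <= r')%N.
Proof.
move=> [r_argmax _] [r'_argmax r'_max]; rewrite leqNgt; apply/negP => r'_lt_r.
have r_argmax' : is_argmax n F f theta' r.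
  split=> [|s s_range]; first exact: r_argmax.1.
  apply: le_trans (r'_argmax.2 s s_range) _.
  apply: Ar_le_transfer (ltnW r'_lt_r) _ _; first by case/andP: r'_argmax.1.
    exact: argmax_ratio_ge0 r_argmax.
  exact: r_argmax.2 r' r'_argmax.1.
by have := r'_max r r_argmax'; rewrite leqNgt r'_lt_r.
Qed.

Lemma min_argmax_nondecreasing r r' :
  is_min_argmax n F f theta r -> is_min_argmax n F f theta' r' -> (r <= r')%N.
Proof.
move=> [r_argmax r_min] [r'_argmax _]; rewrite leqNgt; apply/negP => r'_lt_r.
have r'_r : Ar n F f theta r' < Ar n F f theta r.
  rewrite ltNge; apply/negP => r_r'.
  have r'_argmax' : is_argmax n F f theta r'.
    by split=> [|s s_range]; [exact: r'_argmax.1|exact: le_trans (r_argmax.2 s s_range) r_r'].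
  by have := r_min r' r'_argmax'; rewrite leqNgt r'_lt_r.
have : Ar n F f theta' r' < Ar n F f theta' r.
  apply: Ar_lt_transfer (ltnW r'_lt_r) (argmax_ratio_ge0 th01 r_argmax) r'_r.
  by case/andP: r'_argmax.1.
by rewrite ltNge r'_argmax.2 //; exact: r_argmax.1.
Qed.

End loss_aversion_increase.
End optimal_prizes.

Theorem proposition2 (R : realType) (n : nat) (F f : R -> R) :
  (2 <= n)%N -> noise_dist F f ->
  (forall (theta : R) (rs : nat), 0 <= theta <= 1 ->
     is_argmax n F f theta rs ->
     [/\ in_V n (@vs R n rs),
         (forall v : 'I_n -> R, in_V n v -> Mv n F f v theta <= Mv n F f (@vs R n rs) theta) &
         Mv n F f (@vs R n rs) theta = Ar n F f theta rs])
  /\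
  (forall (theta theta' : R), 0 <= theta -> theta < theta' -> theta' <= 1 ->
     (forall r r', is_max_argmax n F f theta r -> is_max_argmax n F f theta' r' -> (r <= r')%N)
     /\
     (forall r r', is_min_argmax n F f theta r -> is_min_argmax n F f theta' r' -> (r <= r')%N)).
Proof.
move=> n_gt1 nd; have B1_ge0 := Bsum1_ge0 F f nd n.
have Bn : Bsum n F f n = 0 by apply: (Bsum_last F f nd); exact: ltnW.
split=> [theta r th01|theta theta' th_ge0 /ltW th_le th'_le1].
  exact: argmax_vs_optimal.
by split; [exact: max_argmax_nondecreasing|exact: min_argmax_nondecreasing].
Qed.
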